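(* Let $S$ be an isolated invariant set with isolating neighborhood $N$ (so $S=\operatorname{Inv} N$). For any neighborhood $V$ of $S$ in $N$ there is an $\varepsilon>0$ with $C_\varepsilon(N,S)\subset V$.
   Context: Let $X$ be a locally compact metric space with metric $d$, $U\subset X$ open and $f:U\to X$ continuous. A solution through $x$ is a map $\sigma:\mathbb Z\to U$ with $\sigma(0)=x$ and $f(\sigma(n))=\sigma(n+1)$ for all $n$; for $N\subset U$, $\operatorname{Inv} N$ is the set of $x\in N$ admitting a solution through $x$ with all values in $N$. A compact $N\subset U$ is an isolating neighborhood if $\operatorname{Inv} N\subset\operatorname{Int} N$; $S$ is an isolated invariant set if $S=\operatorname{Inv} N$ for some isolating neighborhood $N$. For $\varepsilon>0$, a sequence $\{x_n\}_{n=q}^p$ is an $\varepsilon$-chain if $d(f(x_n),x_{n+1})<\varepsilon$ for $n=q,\dots,p-1$. The $\varepsilon$-chain neighborhood $C_\varepsilon(N,S)$ is the set of all $x\in N$ such that for some $k\ge0$ there is an $\varepsilon$-chain $\{x_n\}_{n=-k}^k\subset N$ with $x_0=x$ and $x_k,x_{-k}\in S$. *)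

From HB Require Import structures.
From mathcomp Require Import all_boot all_order all_algebra.
From mathcomp Require Import all_classical all_reals all_analysis.
Set Implicit Arguments. Unset Strict Implicit. Unset Printing Implicit Defensive.
Import Order.TTheory GRing.Theory Num.Theory.
Local Open Scope classical_set_scope.
Local Open Scope ring_scope.

(* A map f : U -> X is modelled as f : X -> X, only its values on U matter. *)

Definition is_solution {X : Type} (U : set X) (f : X -> X) (x : X)
  (sigma : int -> X) : Prop :=
  sigma 0 = x /\ (forall n : int, U (sigma n)) /\
  (forall n : int, f (sigma n) = sigma (n + 1)).

Definition InvN {X : Type} (U : set X) (f : X -> X) (N : set X) : set X :=
  [set x | N x /\ exists sigma : int -> X,
             is_solution U f x sigma /\ (forall n : int, N (sigma n))].

Definition isolating_neighborhood {X : topologicalType} (U : set X)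
  (f : X -> X) (N : set X) : Prop :=
  compact N /\ N `<=` U /\ InvN U f N `<=` interior N.

Definition eps_chain {R : realType} {X : metricType R} (f : X -> X) (eps : R)
  (q p : int) (c : int -> X) : Prop :=
  forall n : int, q <= n -> n < p -> mdist (f (c n)) (c (n + 1)) < eps.

Definition chain_nbhd {R : realType} {X : metricType R} (f : X -> X) (eps : R)
  (N S : set X) : set X :=
  [set x | N x /\ exists (k : nat) (c : int -> X),
     eps_chain f eps (- (k%:Z)) k%:Z c /\
     (forall n : int, - (k%:Z) <= n -> n <= k%:Z -> N (c n)) /\
     c 0 = x /\ S (c k%:Z) /\ S (c (- (k%:Z)))].

Definition nbhd_in {X : topologicalType} (N S V : set X) : Prop :=
  V `<=` N /\ exists O : set X, open O /\ S `<=` O /\ O `&` N `<=` V.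

From mathcomp Require Import all_boot all_order all_algebra.
From mathcomp Require Import all_classical all_reals all_analysis.
From mathcomp Require Import zify lra.
Import Order.TTheory GRing.Theory Num.Theory ArrowAsProduct.
Local Open Scope ring_scope.
Local Open Scope classical_set_scope.

(* If no eps worked, then for every m there would be a 1/(m+1)-chain in N
   through a point outside an open neighbourhood W of S, with both ends in
   S = Inv N.  Continuing such a chain by the orbits through its ends makes it
   bi-infinite.  By Tychonoff N^Z is compact, so these bi-infinite chains have a
   cluster point g in N^Z.  As the chain errors tend to 0 and f is continuous, g
   is an orbit, so g 0 lies in Inv N = S; but g 0 also lies in the closed set
   ~` W, a contradiction. *)

Lemma cluster_closed_preimage {T Y : topologicalType} {F : set_system T}
    {p : T -> Y} {C : set Y} {t : T} :
  continuous p -> closed C -> F (p @^-1` C) -> cluster F t -> C (p t).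
Proof.
move=> p_cont C_closed FC; rewrite clusterE => /(_ _ FC).
exact: preimage_closed (fun u _ => p_cont u) C_closed t.
Qed.

Section Splice.
Context {T : Type} (k : nat) (a c b : int -> T).

Definition splice (n : int) : T :=
  if n < - k%:Z then a (n + k%:Z) else if k%:Z < n then b (n - k%:Z) else c n.

Lemma splice_mid n : - k%:Z <= n -> n <= k%:Z -> splice n = c n.
Proof. by rewrite /splice => ? ?; case: ltP; [lia|]; case: ltP; [lia|]. Qed.

Lemma splice_left n : a 0 = c (- k%:Z) -> n <= - k%:Z -> splice n = a (n + k%:Z).
Proof.
rewrite le_eqVlt => a0 /predU1P[->|nk]; last by rewrite /splice nk.
by rewrite splice_mid ?addNr //; lia.
Qed.

Lemma splice_right n : b 0 = c k%:Z -> k%:Z <= n -> splice n = b (n - k%:Z).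
Proof.
rewrite le_eqVlt => b0 /predU1P[<-|kn]; first by rewrite splice_mid ?subrr //; lia.
by rewrite /splice kn; case: ltP => //; lia.
Qed.

End Splice.

Section Chains.
Context {R : realType} {X : metricType R} (f : X -> X).

Definition biinfinite_chain (eps : R) (N : set X) (c : int -> X) : Prop :=
  (forall n, N (c n)) /\ (forall n, mdist (f (c n)) (c (n + 1)) < eps).

Lemma chain_nbhd_biinfinite {U N : set X} {eps : R} {x : X} : 0 < eps ->
  chain_nbhd f eps N (InvN U f N) x ->
  exists2 c, biinfinite_chain eps N c & c 0 = x.
Proof.
move=> eps_gt0 [_ [k [c [c_chain [cN [c0 [ck c_k]]]]]]].
case: ck => _ [b [[b0 [_ b_orbit]] bN]]; case: c_k => _ [a [[a0 [_ a_orbit]] aN]].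
pose K := k%:Z.
have orbit_step (s : int -> X) n : (forall m, f (s m) = s (m + 1)) ->
    mdist (f (s n)) (s (n + 1)) < eps by move=> ->; rewrite mdistxx.
exists (splice k a c b); last by rewrite splice_mid //; lia.
split=> n.
  have [nl|nl] := leP n (- K); first by rewrite splice_left.
  have [nr|nr] := leP K n; first by rewrite splice_right.
  by rewrite splice_mid; [apply: cN|..]; lia.
have [nl|nl] := ltP n (- K).
  have [nl' n1l] : n <= - K /\ n + 1 <= - K by split; lia.
  by rewrite !splice_left // addrAC; apply: orbit_step.
have [nr|nr] := leP K n.
  have n1r : K <= n + 1 by lia.
  by rewrite !splice_right // addrAC; apply: orbit_step.
by rewrite !splice_mid; [apply: c_chain|..]; lia.
Qed.

Lemma cluster_chain_step (F : set_system (int -> X)) (g : int -> X) (n : int) :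
  {for g n, continuous f} ->
  (forall e, 0 < e -> F [set h | mdist (f (h n)) (h (n + 1)) < e]) ->
  cluster F g -> f (g n) = g (n + 1).
Proof.
move=> f_cont F_small g_cluster; apply: contrapT => /eqP; rewrite -mdist_gt0 => d_gt0.
(* For h near g in F: d(f (g n), g (n + 1)) <= d(f (g n), f (h n))
   + d(f (h n), h (n + 1)) + d(h (n + 1), g (n + 1)) < 3 e. *)
pose e := mdist (f (g n)) (g (n + 1)) / 3.
have e_gt0 : 0 < e by rewrite divr_gt0.
have near_g : nbhs g ((f \o proj n) @^-1` ball (f (g n)) e `&`
                      proj (n + 1) @^-1` ball (g (n + 1)) e).
  apply: filterI.
    have := continuous_comp (@proj_continuous int (fun=> X) n g) f_cont.
    by apply; apply: nbhsx_ballx.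
  by apply: proj_continuous; apply: nbhsx_ballx.
have [h [/= h_small []]] := g_cluster _ _ (F_small e e_gt0) near_g.
rewrite /proj /= !ballEmdist /= => fh_near h_near.
have := metric_triangle (f (g n)) (f (h n)) (g (n + 1)).
have := metric_triangle (f (h n)) (h (n + 1)) (g (n + 1)).
rewrite (metric_sym (h (n + 1))); move: h_small fh_near h_near; rewrite /e; lra.
Qed.

Lemma InvN_meets_closed_of_chains {U N C : set X} :
  compact N -> N `<=` U -> open U -> {within U, continuous f} -> closed C ->
  (forall m : nat, exists c, biinfinite_chain m.+1%:R^-1 N c /\ C (c 0)) ->
  exists2 x, InvN U f N x & C x.
Proof.
move=> N_compact NU U_open f_cont C_closed chains.
have f_cont_N x : N x -> {for x, continuous f}.
  by move=> /NU Ux; move: f_cont; rewrite continuous_open_subspace //; apply; rewrite inE.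
have [cs csP] := choice chains.
have [g [gN g_cluster]] : [set h | forall i, N (h i)] `&` cluster (cs @ \oo) !=set0.
  apply: (@tychonoff int (fun=> X) (fun=> N) (fun=> N_compact)).
  by apply: (@filterE nat \oo) => m; have [[]] := csP m.
have g_orbit n : f (g n) = g (n + 1).
  apply: cluster_chain_step g_cluster; first exact: f_cont_N.
  move=> e e_gt0; apply: filterS (near_infty_natSinv_lt (PosNum e_gt0)) => m /= me.
  by have [[_ cs_step] _] := csP m; apply: lt_trans (cs_step n) me.
exists (g 0).
  by split=> //; exists g; do !split=> //; move=> i; apply: NU.
apply: (cluster_closed_preimage (@proj_continuous int (fun=> X) 0) C_closed _ g_cluster).
by apply: (@filterE nat \oo) => m; have [_] := csP m.
Qed.

End Chains.

Theorem mainTheorem9 (R : realType) (X : metricType R)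
  (U : set X) (f : X -> X) (N S V : set X) :
  locally_compact [set: X] ->
  open U ->
  {within U, continuous f} ->
  isolating_neighborhood U f N ->
  S = InvN U f N ->
  nbhd_in N S V ->
  exists2 eps : R, (0 < eps)%R & (chain_nbhd f eps N S `<=` V).
Proof.
move=> _ U_open f_cont [N_compact [NU _]] -> [_ [W [W_open [SW WNV]]]].
apply: contrapT => no_eps.
have chains (m : nat) : exists c, biinfinite_chain f m.+1%:R^-1 N c /\ ~ W (c 0).
  have eps_gt0 : 0 < m.+1%:R^-1 :> R by rewrite invr_gt0.
  have /existsNP[x /not_implyP[x_chain nVx]] :
      ~ chain_nbhd f m.+1%:R^-1 N (InvN U f N) `<=` V.
    by move=> sub; apply: no_eps; exists m.+1%:R^-1.
  have [c c_chain c0] := chain_nbhd_biinfinite f eps_gt0 x_chain.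
  by exists c; split=> // Wc0; apply/nVx/WNV; rewrite -c0; split; last exact: c_chain.1.
have [x /SW Wx nWx] :=
  InvN_meets_closed_of_chains f N_compact NU U_open f_cont (open_closedC W_open) chains.
exact: nWx Wx.
Qed.
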